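(* Let $p\in\Delta_7$ be strictly positive and suppose that one of the six slice determinants $d_{i,j}(p)$ ($i\in\{1,2,3\}$, $j\in\{0,1\}$) vanishes. Then $p\in\operatorname{RBM}_{3,2}$ and $p\in\mathcal{M}_{3,3}$.
   Context: A distribution of three binary random variables is a $2\times2\times2$ tensor $p=(p_{ijk})_{i,j,k\in\{0,1\}}$ with nonnegative entries summing to $1$; the set of these is $\Delta_7$. For $a,b,c\in\mathbb{R}^2_{\ge0}$, $a\otimes b\otimes c$ is the tensor with entries $a_ib_jc_k$. $\mathcal{M}_{3,3}$ is the set of $p\in\Delta_7$ that are a sum of three tensors of the form $a\otimes b\otimes c$ with $a,b,c\in\mathbb{R}^2_{\ge0}$. $\operatorname{RBM}_{3,2}$ is the set of $p\in\Delta_7$ of the form $p=(a_1\otimes b_1\otimes c_1+d_1\otimes e_1\otimes f_1)*(a_2\otimes b_2\otimes c_2+d_2\otimes e_2\otimes f_2)$ with all vectors in $\mathbb{R}^2_{\ge0}$, where $*$ is the entrywise product. The slice determinants are $d_{1,0}=p_{000}p_{011}-p_{001}p_{010}$, $d_{1,1}=p_{100}p_{111}-p_{101}p_{110}$, $d_{2,0}=p_{000}p_{101}-p_{001}p_{100}$, $d_{2,1}=p_{010}p_{111}-p_{011}p_{110}$, $d_{3,0}=p_{000}p_{110}-p_{010}p_{100}$, $d_{3,1}=p_{001}p_{111}-p_{011}p_{101}$. *)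

(* real numbers R. Binary index 0 is [false], 1 is [true]. *)
From Stdlib Require Import Reals.
Open Scope R_scope.

Definition tensor := bool -> bool -> bool -> R.
Definition vec2 := bool -> R.

Definition nonneg2 (a : vec2) : Prop := forall i, 0 <= a i.

Definition outer3 (a b c : vec2) : tensor := fun i j k => a i * b j * c k.

Definition sumb (f : bool -> R) : R := f false + f true.

Definition in_Delta7 (p : tensor) : Prop :=
  (forall i j k, 0 <= p i j k) /\
  sumb (fun i => sumb (fun j => sumb (fun k => p i j k))) = 1.

Definition strictly_positive (p : tensor) : Prop := forall i j k, 0 < p i j k.

Definition in_M33 (p : tensor) : Prop :=
  in_Delta7 p /\
  exists a1 b1 c1 a2 b2 c2 a3 b3 c3 : vec2,
    nonneg2 a1 /\ nonneg2 b1 /\ nonneg2 c1 /\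
    nonneg2 a2 /\ nonneg2 b2 /\ nonneg2 c2 /\
    nonneg2 a3 /\ nonneg2 b3 /\ nonneg2 c3 /\
    forall i j k, p i j k = outer3 a1 b1 c1 i j k + outer3 a2 b2 c2 i j k
                            + outer3 a3 b3 c3 i j k.

Definition in_RBM32 (p : tensor) : Prop :=
  in_Delta7 p /\
  exists a1 b1 c1 d1 e1 f1 a2 b2 c2 d2 e2 f2 : vec2,
    nonneg2 a1 /\ nonneg2 b1 /\ nonneg2 c1 /\
    nonneg2 d1 /\ nonneg2 e1 /\ nonneg2 f1 /\
    nonneg2 a2 /\ nonneg2 b2 /\ nonneg2 c2 /\
    nonneg2 d2 /\ nonneg2 e2 /\ nonneg2 f2 /\
    forall i j k, p i j k =
      (outer3 a1 b1 c1 i j k + outer3 d1 e1 f1 i j k) *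
      (outer3 a2 b2 c2 i j k + outer3 d2 e2 f2 i j k).

(* slice determinants d_{i,j}, i ∈ {1,2,3} (other i: 0, unused), j : bool (false = 0) *)
Definition slice_det (i : nat) (j : bool) (p : tensor) : R :=
  match i with
  | 1%nat => p j false false * p j true true - p j false true * p j true false
  | 2%nat => p false j false * p true j true - p false j true * p true j false
  | 3%nat => p false false j * p true true j - p false true j * p true false j
  | _ => 0
  end.

(* A vanishing slice determinant makes that slice, say p_{j..}, a nonnegative rank-one
   matrix b ⊗ c, so p = e_j ⊗ b ⊗ c + (the other slice).  Splitting the other slice into
   its two columns gives three rank-one terms, hence p ∈ M_{3,3}.  For RBM_{3,2}, write the
   other, positive, slice as g ⊗ h + r ⊗ e_1 with g, h > 0 and r ≥ 0; then
   p = (1 ⊗ g ⊗ h + e_{1-j} ⊗ r ⊗ e_1) * (e_j ⊗ (b/g) ⊗ (c/h) + e_{1-j} ⊗ 1 ⊗ 1).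
   The other two families of slices reduce to the first by permuting the axes. *)
From Stdlib Require Import Reals Lra.
Open Scope R_scope.

Definition unit2 (i : bool) : vec2 := fun x => if Bool.eqb i x then 1 else 0.
Definition ones : vec2 := fun _ => 1.

Lemma nonneg2_unit2 (i : bool) : nonneg2 (unit2 i).
Proof. intros x; unfold unit2; destruct (Bool.eqb i x); lra. Qed.

Lemma nonneg2_ones : nonneg2 ones.
Proof. intros x; unfold ones; lra. Qed.

Lemma slice_det1_eq0_rank_one (p : tensor) (j : bool) :
  0 < p j false false -> slice_det 1 j p = 0 ->
  forall y z, p j y z = p j y false * (p j false z / p j false false).
Proof.
  simpl; intros Hpos Hdet [|] [|]; field_simplify_eq; lra.
Qed.

Lemma positive_matrix_ratio_bound (m : bool -> bool -> R) :
  (forall y z, 0 < m y z) -> exists t, 0 < t /\ forall y, t * m y false <= m y true.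
Proof.
  intros Hm.
  assert (Hratio : forall y, 0 < m y true / m y false) by
    (intros y; apply Rdiv_lt_0_compat; apply Hm).
  exists (Rmin (m false true / m false false) (m true true / m true false) / 2).
  split.
  - apply Rmin_case; generalize (Hratio false) (Hratio true); lra.
  - intros y.
    assert (Hle : Rmin (m false true / m false false) (m true true / m true false) / 2
                  <= m y true / m y false).
    { generalize (Rmin_l (m false true / m false false) (m true true / m true false))
                 (Rmin_r (m false true / m false false) (m true true / m true false))
                 (Hratio false) (Hratio true).
      destruct y; lra. }
    replace (m y true) with (m y true / m y false * m y false)
      by (field; apply Rgt_not_eq, Hm).
    apply Rmult_le_compat_r; [left; apply Hm | exact Hle].
Qed.

Lemma in_M33_of_rank_one_slice (p : tensor) (j : bool) (b c : vec2) :
  in_Delta7 p -> nonneg2 b -> nonneg2 c ->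
  (forall y z, p j y z = b y * c z) -> in_M33 p.
Proof.
  intros HD Hb Hc Hslice; split; [exact HD|].
  exists (unit2 j), b, c,
         (unit2 (negb j)), (fun y => p (negb j) y false), (unit2 false),
         (unit2 (negb j)), (fun y => p (negb j) y true), (unit2 true).
  assert (Hp : forall x y z, 0 <= p x y z) by apply HD.
  repeat split; auto using nonneg2_unit2; try (intros y; apply Hp).
  intros x y z; unfold outer3, unit2.
  destruct j, x; simpl; try rewrite Hslice; destruct z; simpl; ring.
Qed.

Lemma in_RBM32_of_slice_decomposition (p : tensor) (j : bool) (b c g h r : vec2) :
  in_Delta7 p -> nonneg2 b -> nonneg2 c -> nonneg2 r ->
  (forall y, 0 < g y) -> (forall z, 0 < h z) ->
  (forall y z, p j y z = b y * c z) ->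
  (forall y z, p (negb j) y z = g y * h z + r y * unit2 true z) ->
  in_RBM32 p.
Proof.
  intros HD Hb Hc Hr Hg Hh Hslice Hother; split; [exact HD|].
  exists ones, g, h, (unit2 (negb j)), r, (unit2 true),
         (unit2 j), (fun y => b y / g y), (fun z => c z / h z), (unit2 (negb j)), ones, ones.
  assert (Hbg : nonneg2 (fun y => b y / g y)) by
    (intros y; apply Rmult_le_pos; [apply Hb | left; apply Rinv_0_lt_compat, Hg]).
  assert (Hch : nonneg2 (fun z => c z / h z)) by
    (intros z; apply Rmult_le_pos; [apply Hc | left; apply Rinv_0_lt_compat, Hh]).
  repeat split; auto using nonneg2_unit2, nonneg2_ones; try (intros y; left; auto).
  intros x y z; unfold outer3, unit2, ones.
  destruct j, x, z; simpl; rewrite ?Hslice, ?Hother; unfold unit2; simpl;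
    first [ring | field; split; apply Rgt_not_eq; first [apply Hg | apply Hh]].
Qed.

Lemma in_RBM32_of_rank_one_slice (p : tensor) (j : bool) (b c : vec2) :
  in_Delta7 p -> (forall y z, 0 < p (negb j) y z) -> nonneg2 b -> nonneg2 c ->
  (forall y z, p j y z = b y * c z) -> in_RBM32 p.
Proof.
  intros HD Hpos Hb Hc Hslice.
  destruct (positive_matrix_ratio_bound (p (negb j)) Hpos) as (t & Ht & Hcol).
  apply (in_RBM32_of_slice_decomposition p j b c
           (fun y => p (negb j) y false) (fun z => if z then t else 1)
           (fun y => p (negb j) y true - t * p (negb j) y false));
    auto.
  - intros y; generalize (Hcol y); lra.
  - intros [|]; lra.
  - intros y [|]; unfold unit2; simpl; ring.
Qed.

Lemma slice_det1_eq0 (p : tensor) (j : bool) :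
  in_Delta7 p -> strictly_positive p -> slice_det 1 j p = 0 ->
  in_RBM32 p /\ in_M33 p.
Proof.
  intros HD HP Hdet.
  pose proof (slice_det1_eq0_rank_one p j (HP j false false) Hdet) as Hslice.
  assert (Hb : nonneg2 (fun y => p j y false)) by (intros y; apply HD).
  assert (Hc : nonneg2 (fun z => p j false z / p j false false)) by
    (intros z; left; apply Rdiv_lt_0_compat; apply HP).
  split.
  - exact (in_RBM32_of_rank_one_slice p j _ _ HD (HP (negb j)) Hb Hc Hslice).
  - exact (in_M33_of_rank_one_slice p j _ _ HD Hb Hc Hslice).
Qed.

Definition swap12 (p : tensor) : tensor := fun x y z => p y x z.
Definition rot (p : tensor) : tensor := fun x y z => p y z x.

Lemma slice_det2_swap12 (p : tensor) (j : bool) : slice_det 2 j p = slice_det 1 j (swap12 p).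
Proof. reflexivity. Qed.

Lemma slice_det3_rot (p : tensor) (j : bool) : slice_det 3 j p = slice_det 1 j (rot p).
Proof. reflexivity. Qed.

Lemma in_Delta7_swap12 (p : tensor) : in_Delta7 (swap12 p) <-> in_Delta7 p.
Proof.
  unfold in_Delta7, swap12, sumb; split; intros [Hp Hsum];
    split; [intros i j k; apply Hp | lra | intros i j k; apply Hp | lra].
Qed.

Lemma in_Delta7_rot (p : tensor) : in_Delta7 (rot p) <-> in_Delta7 p.
Proof.
  unfold in_Delta7, rot, sumb; split; intros [Hp Hsum];
    split; [intros i j k; apply Hp | lra | intros i j k; apply Hp | lra].
Qed.

Lemma in_M33_swap12 (p : tensor) : in_M33 (swap12 p) -> in_M33 p.
Proof.
  intros [HD (a1 & b1 & c1 & a2 & b2 & c2 & a3 & b3 & c3 & H1 & H2 & H3 & H4 & H5 & H6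
              & H7 & H8 & H9 & Hp)].
  split; [apply (in_Delta7_swap12 p), HD|].
  exists b1, a1, c1, b2, a2, c2, b3, a3, c3; repeat split; auto.
  intros x y z; generalize (Hp y x z); unfold swap12, outer3; intros ->; ring.
Qed.

Lemma in_M33_rot (p : tensor) : in_M33 (rot p) -> in_M33 p.
Proof.
  intros [HD (a1 & b1 & c1 & a2 & b2 & c2 & a3 & b3 & c3 & H1 & H2 & H3 & H4 & H5 & H6
              & H7 & H8 & H9 & Hp)].
  split; [apply (in_Delta7_rot p), HD|].
  exists b1, c1, a1, b2, c2, a2, b3, c3, a3; repeat split; auto.
  intros x y z; generalize (Hp z x y); unfold rot, outer3; intros ->; ring.
Qed.

Lemma in_RBM32_swap12 (p : tensor) : in_RBM32 (swap12 p) -> in_RBM32 p.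
Proof.
  intros [HD (a1 & b1 & c1 & d1 & e1 & f1 & a2 & b2 & c2 & d2 & e2 & f2
              & H1 & H2 & H3 & H4 & H5 & H6 & H7 & H8 & H9 & H10 & H11 & H12 & Hp)].
  split; [apply (in_Delta7_swap12 p), HD|].
  exists b1, a1, c1, e1, d1, f1, b2, a2, c2, e2, d2, f2; repeat split; auto.
  intros x y z; generalize (Hp y x z); unfold swap12, outer3; intros ->; ring.
Qed.

Lemma in_RBM32_rot (p : tensor) : in_RBM32 (rot p) -> in_RBM32 p.
Proof.
  intros [HD (a1 & b1 & c1 & d1 & e1 & f1 & a2 & b2 & c2 & d2 & e2 & f2
              & H1 & H2 & H3 & H4 & H5 & H6 & H7 & H8 & H9 & H10 & H11 & H12 & Hp)].
  split; [apply (in_Delta7_rot p), HD|].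
  exists b1, c1, a1, e1, f1, d1, b2, c2, a2, e2, f2, d2; repeat split; auto.
  intros x y z; generalize (Hp z x y); unfold rot, outer3; intros ->; ring.
Qed.

Theorem mainTheorem11 (p : tensor) :
  in_Delta7 p -> strictly_positive p ->
  (exists (i : nat) (j : bool), (i = 1%nat \/ i = 2%nat \/ i = 3%nat) /\ slice_det i j p = 0) ->
  in_RBM32 p /\ in_M33 p.
Proof.
  intros HD HP (i & j & [-> | [-> | ->]] & Hdet).
  - exact (slice_det1_eq0 p j HD HP Hdet).
  - rewrite slice_det2_swap12 in Hdet.
    destruct (slice_det1_eq0 (swap12 p) j) as [Hrbm Hm33];
      [apply (in_Delta7_swap12 p), HD | intros x y z; apply HP | exact Hdet |].
    split; [apply in_RBM32_swap12, Hrbm | apply in_M33_swap12, Hm33].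
  - rewrite slice_det3_rot in Hdet.
    destruct (slice_det1_eq0 (rot p) j) as [Hrbm Hm33];
      [apply (in_Delta7_rot p), HD | intros x y z; apply HP | exact Hdet |].
    split; [apply in_RBM32_rot, Hrbm | apply in_M33_rot, Hm33].
Qed.
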